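(* Let $v$ be any Borel measurable function from $[0,T]\times\mathbb{R}^d$ to $\mathbb{R}$ such that $$\int_0^T \mathbb{E}\Big[\Big|\inf_{\kappa\in U} H\big(t,X_t,\kappa,\partial_x v(t,X_t),\partial_{xx}^2 v(t,X_t)\big)\Big|\Big]\,\mathrm{d}t<\infty.$$ Assume the optimal feedback control exists under $v$, i.e. there is $u\in\mathcal{U}_{\mathrm{ad}}$ with $$H_t^{u,v}=\inf_{\kappa\in U} H\big(t,X_t,\kappa,\partial_x v(t,X_t),\partial_{xx}^2 v(t,X_t)\big)\quad (\ast)$$ for $(t,\omega)\in[0,T]\times\Omega$, a.e.-$\mathrm{d}t\times\mathbb{P}$. Then a control $u$ satisfying $(\ast)$ can be found from the minimization problem: find $u\in\mathcal{U}_{\mathrm{ad}}$ such that $$\int_0^T\mathbb{E}[H_t^{u,v}]\,\mathrm{d}t=\inf_{\bar u\in\mathcal{U}_{\mathrm{ad}}}\int_0^T\mathbb{E}[H_t^{\bar u,v}]\,\mathrm{d}t;$$ i.e. this minimization problem has a solution, and any solution satisfies $(\ast)$ a.e.-$\mathrm{d}t\times\mathbb{P}$.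
   Context: Let $(\Omega,\mathcal{F},\mathbb{F}^B,\mathbb{P})$ be a filtered complete probability space with $\mathbb{F}^B=(\mathcal{F}_t)_{0\le t\le T}$ the natural filtration of a standard $q$-dimensional Brownian motion $B$, and $T\in(0,\infty)$. Let $U\subset\mathbb{R}^m$ and let $\mathcal{U}_{\mathrm{ad}}$ be the set of Borel measurable functions $u:[0,T]\times\mathbb{R}^d\to U$. Let $H:[0,T]\times\mathbb{R}^d\times U\times\mathbb{R}^d\times\mathbb{R}^{d\times d}\to\mathbb{R}$, $(t,x,\kappa,z,p)\mapsto H(t,x,\kappa,z,p)$, be the Hamiltonian of the HJB-type equation $\partial_t v+\mathcal{L}v+\inf_{\kappa\in U}H(t,x,\kappa,\partial_x v,\partial_{xx}^2 v)=0$, where $\mathcal{L}=\mu^\top(t,x)\partial_x+\frac12\operatorname{Tr}[\sigma\sigma^\top(t,x)\partial_{xx}^2]$ for given $\mu:[0,T]\times\mathbb{R}^d\to\mathbb{R}^d$, $\sigma:[0,T]\times\mathbb{R}^d\to\mathbb{R}^{d\times q}$. Let $X$ be the uncontrolled diffusion $X_t=X_0+\int_0^t\mu(s,X_s)\,\mathrm{d}s+\int_0^t\sigma(s,X_s)\,\mathrm{d}B_s$, $t\in[0,T]$. For $u\in\mathcal{U}_{\mathrm{ad}}$ and $v$, the Hamiltonian process is $H_t^{u,v}:=H\big(t,X_t,u(t,X_t),\partial_x v(t,X_t),\partial_{xx}^2 v(t,X_t)\big)$ (with $\partial_x$ the gradient and $\partial_{xx}^2$ the Hessian in $x$). *)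

From HB Require Import structures.
From mathcomp Require Import all_boot all_order all_algebra.
From mathcomp Require Import all_classical all_reals all_analysis.
Set Implicit Arguments. Unset Strict Implicit. Unset Printing Implicit Defensive.
Import Order.TTheory GRing.Theory Num.Theory.
Import numFieldNormedType.Exports.
Local Open Scope classical_set_scope.
Local Open Scope ring_scope.

Definition Rvec (R : realType) (n : nat) := g_sigma_algebraType (@open 'rV[R]_n).
Definition Rmat (R : realType) (n : nat) := g_sigma_algebraType (@open 'M[R]_n).

Definition ebasis (R : realType) (n : nat) (i : 'I_n) : 'rV[R]_n := delta_mx 0 i.

Definition gradx (R : realType) (d : nat) (v : R -> 'rV[R]_d -> R)
  (t : R) (x : 'rV[R]_d) : 'rV[R]_d :=
  \row_i ('D_(@ebasis R d i) (v t) x).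

Definition hessx (R : realType) (d : nat) (v : R -> 'rV[R]_d -> R)
  (t : R) (x : 'rV[R]_d) : 'M[R]_d :=
  \matrix_(i, j) ('D_(@ebasis R d j) ('D_(@ebasis R d i) (v t)) x).

Definition Uad (R : realType) (d m : nat) (T : R) (U : set 'rV[R]_m)
  : set (R -> 'rV[R]_d -> 'rV[R]_m) :=
  [set u | @measurable_fun _ _ (R * Rvec R d)%type (Rvec R m)
             (`[0, T] `*` setT) (fun z => u z.1 z.2)
         /\ forall t x, 0 <= t <= T -> U (u t x)].

Definition Hproc (R : realType) (d m : nat) (Omega : Type)
  (H : R -> 'rV[R]_d -> 'rV[R]_m -> 'rV[R]_d -> 'M[R]_d -> R)
  (X : R -> Omega -> 'rV[R]_d) (v : R -> 'rV[R]_d -> R)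
  (u : R -> 'rV[R]_d -> 'rV[R]_m) (t : R) (w : Omega) : R :=
  H t (X t w) (u t (X t w)) (gradx v t (X t w)) (hessx v t (X t w)).

Definition Hinf (R : realType) (d m : nat) (Omega : Type) (U : set 'rV[R]_m)
  (H : R -> 'rV[R]_d -> 'rV[R]_m -> 'rV[R]_d -> 'M[R]_d -> R)
  (X : R -> Omega -> 'rV[R]_d) (v : R -> 'rV[R]_d -> R)
  (t : R) (w : Omega) : \bar R :=
  ereal_inf [set (H t (X t w) k (gradx v t (X t w)) (hessx v t (X t w)))%:E
            | k in U].

Definition Jcost (R : realType) (d m : nat) (dO : measure_display)
  (Omega : measurableType dO) (P : probability Omega R)
  (T : R)
  (H : R -> 'rV[R]_d -> 'rV[R]_m -> 'rV[R]_d -> 'M[R]_d -> R)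
  (X : R -> Omega -> 'rV[R]_d) (v : R -> 'rV[R]_d -> R)
  (u : R -> 'rV[R]_d -> 'rV[R]_m) : \bar R :=
  (\int[lebesgue_measure]_(t in `[0%R, T]%classic) \int[P]_w (Hproc H X v u t w)%:E)%E.

From HB Require Import structures.
From mathcomp Require Import all_boot all_order all_algebra.
From mathcomp Require Import all_classical all_reals all_analysis.
From mathcomp Require Import measurable_realfun.
Import Order.TTheory GRing.Theory Num.Theory.
Import numFieldNormedType.Exports.
Local Open Scope classical_set_scope.
Local Open Scope ring_scope.

(* For every admissible u, H^{u,v} dominates inf_k H pointwise; hence the
   control u0 attaining the infimum a.e. has the a.e. smallest Hamiltonian
   process, and by monotonicity of the iterated integral the smallest cost, so
   u0 solves the minimization problem. If u is another minimizer, then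
   H^{u0} <= H^u a.e. while J(u) <= J(u0); since H^{u0} = inf_k H is integrable,
   the nonnegative difference H^u - H^{u0} has zero integral, so it vanishes
   a.e. on each time section and therefore a.e. on [0,T] x Omega. *)

Section ae_le_integral.
Local Open Scope ereal_scope.
Context {d} {T : measurableType d} {R : realType} (mu : {measure set T -> \bar R}).

Lemma ge0_le_integral_nonmeasurable (D : set T) (f g : T -> \bar R) :
  (forall x, D x -> 0 <= f x) -> (forall x, D x -> f x <= g x) ->
  \int[mu]_(x in D) f x <= \int[mu]_(x in D) g x.
Proof.
move=> f0 fg.
have g0 x : D x -> 0 <= g x by move=> Dx; exact: le_trans (f0 _ Dx) (fg _ Dx).
rewrite (ge0_integralE mu f0) (ge0_integralE mu g0).
apply: ereal_sup_le => _ [h hf <-]; exists h => //= x.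
apply: le_trans (hf x) _; rewrite /patch; case: ifPn => // /set_mem; exact: fg.
Qed.

Context {D : set T} (mD : measurable D).

Lemma ae_ge0_le_integral_nonmeasurable {f g : T -> \bar R} :
  measurable_fun D f -> (forall x, D x -> 0 <= f x) ->
  (forall x, D x -> 0 <= g x) -> {ae mu, forall x, D x -> f x <= g x} ->
  \int[mu]_(x in D) f x <= \int[mu]_(x in D) g x.
Proof.
move=> mf f0 g0 [N [mN N0 /subsetCl fgN]].
rewrite (ge0_negligible_integral mN mD mf f0 N0) (integral_mkcond (D `\` N)).
rewrite [leRHS]integral_mkcond; apply: ge0_le_integral_nonmeasurable => x _.
  by rewrite /patch; case: ifPn => // /set_mem [Dx _]; exact: f0.
rewrite /patch; case: ifPn => [/set_mem [Dx Nx]|_].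
  by rewrite mem_set //; exact: fgN.
by case: ifPn => // /set_mem; exact: g0.
Qed.

Section ae_le.
Context {f g : T -> \bar R}.
Hypotheses (mf : measurable_fun D f) (mg : measurable_fun D g).
Hypothesis fg : {ae mu, forall x, D x -> f x <= g x}.

Lemma ae_le_funepos : {ae mu, forall x, D x -> f^\+ x <= g^\+ x}.
Proof.
apply: filterS fg => x + Dx => /(_ Dx) fgx.
by apply: (@funepos_le _ _ [set x]) => [y /set_mem ->|]; last exact/mem_set.
Qed.

Lemma ae_le_funeneg : {ae mu, forall x, D x -> g^\- x <= f^\- x}.
Proof.
apply: filterS fg => x + Dx => /(_ Dx) fgx.
by apply: (@funeneg_le _ _ [set x]) => [y /set_mem ->|]; last exact/mem_set.
Qed.

Lemma ae_le_integral : \int[mu]_(x in D) f x <= \int[mu]_(x in D) g x.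
Proof.
rewrite (integralE _ _ f) (integralE _ _ g).
apply: leeB; apply: ae_ge0_le_integral => //;
  by [exact: measurable_funepos|exact: measurable_funeneg
     |exact: ae_le_funepos|exact: ae_le_funeneg].
Qed.

Hypothesis intf : mu.-integrable D f.
Hypothesis gf : \int[mu]_(x in D) g x <= \int[mu]_(x in D) f x.

Lemma ae_le_integrable : mu.-integrable D g.
Proof.
have gnf : \int[mu]_(x in D) g^\- x < +oo.
  apply: le_lt_trans (integral_funeneg_lt_pinfty mD intf).
  apply: ae_ge0_le_integral => //;
    by [exact: measurable_funeneg|exact: ae_le_funeneg].
have gpf : \int[mu]_(x in D) g^\+ x < +oo.
  have /fin_numPlt/andP[_ flt] := integrable_fin_num mD intf.
  move: gf; rewrite [X in X <= _]integralE leeBlDr ?ge0_fin_numE ?integral_ge0 //.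
  by move/le_lt_trans; apply; exact: lte_add_pinfty.
apply/integrableP; split => //.
rewrite -[(fun x => `|g x|)]/(abse \o g) fune_abse ge0_integralD //;
  by [exact: lte_add_pinfty|exact: measurable_funepos|exact: measurable_funeneg].
Qed.

Lemma ae_eq_of_le_integral : {ae mu, forall x, D x -> f x = g x}.
Proof.
have intg := ae_le_integrable.
have gBf_ge0 : {ae mu, forall x, D x -> 0 <= g x - f x /\ f x \is a fin_num}.
  apply: filterS2 fg (integrable_ae mD intf) => x fgx finf Dx.
  by split; [rewrite sube_ge0 ?finf //; exact: fgx|exact: finf].
have mgBf : measurable_fun D (fun x => g x - f x) by exact: emeasurable_funB.
have : \int[mu]_(x in D) `|g x - f x| = 0.
  apply/eqP; rewrite eq_le integral_ge0 // andbT.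
  rewrite (ae_eq_integral (fun x => g x - f x)) //; last 2 first.
  - exact: measurableT_comp.
  - by apply: filterS gBf_ge0 => x + Dx => /(_ Dx)[/gee0_abs].
  by rewrite integralB // leeBlDr ?add0e //; exact: integrable_fin_num.
move/(ae_eq_integral_abs mu mD mgBf).
apply: filterS2 gBf_ge0 => x + + Dx => /(_ Dx)[_ /fineK <-] /(_ Dx).
by case: (g x) => //= r /eqP; rewrite -EFinB eqe subr_eq0 => /eqP ->.
Qed.

End ae_le.

End ae_le_integral.

Section measurable_patch.
Context {d1} {T1 : measurableType d1} {D : set T1} (mD : measurable D).

Lemma measurable_fun_patch {d2} {T2 : measurableType d2} (c : T2) {f : T1 -> T2} :
  measurable_fun D f -> measurable_fun setT (patch (fun=> c) D f).
Proof.
move=> mf _ B mB; rewrite setTI.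
have mfB : measurable (D `&` f @^-1` B) by exact: mf.
have [Bc|nBc] := pselect (B c).
- have -> : patch (fun=> c) D f @^-1` B = (D `&` f @^-1` B) `|` ~` D.
    apply/seteqP; split => x /=; rewrite /patch;
      case: ifPn => [/set_mem|/negP] Dx.
    + by left.
    + by right => /mem_set.
    + by case=> [[]//|/(_ Dx)].
    + by move=> _.
  by apply: measurableU => //; exact: measurableC.
- have -> : patch (fun=> c) D f @^-1` B = D `&` f @^-1` B.
    apply/seteqP; split => x /=; rewrite /patch;
      case: ifPn => [/set_mem|/negP] Dx.
    + by [].
    + by move/nBc.
    + by case.
    + by case=> /mem_set.
  exact: mfB.
Qed.

Lemma measurable_fun_pair_in d2 d3 (T2 : measurableType d2)
    (T3 : measurableType d3) (f : T1 -> T2) (g : T1 -> T3) :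
  measurable_fun D f -> measurable_fun D g ->
  measurable_fun D (fun x => (f x, g x)).
Proof.
move=> mf mg; have [->|/set0P[x0 Dx0]] := eqVneq D set0.
  exact: measurable_fun_set0.
pose F x := (patch (fun=> f x0) D f x, patch (fun=> g x0) D g x).
apply: (eq_measurable_fun F); first by move=> x Dx; rewrite /F !patchT.
apply: measurable_funTS.
by apply: measurable_fun_pair; exact: measurable_fun_patch.
Qed.

End measurable_patch.

Section iterated_integral.
Local Open Scope ereal_scope.
Context {d1 d2} {T1 : measurableType d1} {T2 : measurableType d2} {R : realType}.
Context (mu1 : {measure set T1 -> \bar R})
  (mu2 : {sigma_finite_measure set T2 -> \bar R}).
Context {A : set T1} (mA : measurable A).
Local Notation pm := (product_measure1 mu1 mu2).
Local Notation D := (A `*` [set: T2]).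

Let mD : measurable D. Proof. exact: measurableX. Qed.

Lemma ae_product_xsection {Q : T1 * T2 -> Prop} :
  {ae pm, forall z, A z.1 -> Q z} ->
  {ae mu1, forall t, A t -> {ae mu2, forall w, Q (t, w)}}.
Proof.
move=> [N [mN N0 QN]].
have : \int[mu1]_t `|(mu2 \o xsection N) t| = 0.
  by rewrite -N0; apply: eq_integral => t _; rewrite gee0_abs.
move/(ae_eq_integral_abs mu1 measurableT (measurable_fun_xsection mu2 mN)).
apply: filterS => t N0t At; exists (xsection N t); split.
- exact: measurable_xsection.
- exact: N0t.
- move=> w nQ; rewrite /xsection /=; apply/mem_set/QN => /= QA.
  by apply: nQ; exact: QA.
Qed.

Lemma ae_product_of_xsection (f g : T1 * T2 -> R) :
  measurable_fun D f -> measurable_fun D g ->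
  {ae mu1, forall t, A t -> {ae mu2, forall w, f (t, w) = g (t, w)}} ->
  {ae pm, forall z, A z.1 -> f z = g z}.
Proof.
move=> /measurable_EFinP mf /measurable_EFinP mg fg.
pose B := D `&` [set z | (f z)%:E != (g z)%:E].
have mB : measurable B by exact: measurable_neqe.
exists B; split => //.
  rewrite /product_measure1 (ae_eq_integral (cst 0)) ?integral0 //;
    try exact: measurable_fun_xsection.
  apply: filterS fg => t fgt _ /=.
  have [At|nAt] := pselect (A t); last first.
    rewrite (_ : xsection B t = set0) ?measure0 //.
    by apply/seteqP; split => w // /set_mem [[/nAt]].
  have [N [mN N0 fgN]] := fgt At.
  apply: (subset_measure0 _ mN) => //; first exact: measurable_xsection.
  move=> w; rewrite /xsection /= => /set_mem [_ /= /eqP fgw].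
  by apply: fgN => /= fgw'; apply: fgw; rewrite fgw'.
move=> z /= nfg; split.
  by split => //; apply: contrapT => nAz; apply: nfg => /nAz.
by apply/eqP => fgz; apply: nfg => _; exact: EFin_inj fgz.
Qed.

Lemma measurable_fun_fubini_F (g : T1 * T2 -> \bar R) :
  measurable_fun setT g -> measurable_fun setT (fubini_F mu2 g).
Proof.
move=> mg; rewrite (_ : fubini_F mu2 g =
    fubini_F mu2 g^\+ \- fubini_F mu2 g^\-); last first.
  apply/funext => t; rewrite /fubini_F [LHS]integralE.
  by congr (_ - _); apply: eq_integral => w _; rewrite ?funeposE ?funenegE.
apply: emeasurable_funB; apply: measurable_fun_fubini_tonelli_F => //;
  by [exact: measurable_funepos|exact: measurable_funeneg].
Qed.

Lemma measurable_fun_pair2_setX d3 (T3 : measurableType d3) (f : T1 * T2 -> T3) t :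
  A t -> measurable_fun D f -> measurable_fun setT (fun w => f (t, w)).
Proof.
by move=> At mf; apply: (measurable_comp mD _ mf) => // _ [w _ <-].
Qed.

Lemma measurable_fun_fubini_F_setX {f : T1 * T2 -> R} :
  measurable_fun D f -> measurable_fun A (fun t => \int[mu2]_w (f (t, w))%:E).
Proof.
move=> /measurable_EFinP mf.
have /measurable_fun_fubini_F mF := measurable_fun_patch mD 0 mf.
apply: eq_measurable_fun (measurable_funTS mF) => t /set_mem At.
by apply: eq_integral => w _; rewrite patchT // inE.
Qed.

Context {f g : T1 * T2 -> R}.
Hypotheses (mf : measurable_fun D f) (mg : measurable_fun D g).

Let mEf {t} : A t -> measurable_fun setT (fun w => (f (t, w))%:E).
Proof. by move=> At; apply/measurable_EFinP; exact: measurable_fun_pair2_setX. Qed.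

Let mEg {t} : A t -> measurable_fun setT (fun w => (g (t, w))%:E).
Proof. by move=> At; apply/measurable_EFinP; exact: measurable_fun_pair2_setX. Qed.

Lemma ae_le_fubini_F : {ae pm, forall z, A z.1 -> (f z <= g z)%R} ->
  {ae mu1, forall t, A t ->
    \int[mu2]_w (f (t, w))%:E <= \int[mu2]_w (g (t, w))%:E}.
Proof.
move/ae_product_xsection; apply: filterS => t fgt At.
apply: (ae_le_integral mu2 measurableT (mEf At) (mEg At)).
by apply: filterS (fgt At) => w fgw _; rewrite lee_fin.
Qed.

Lemma ae_le_iterated_integral : {ae pm, forall z, A z.1 -> (f z <= g z)%R} ->
  \int[mu1]_(t in A) \int[mu2]_w (f (t, w))%:E <=
  \int[mu1]_(t in A) \int[mu2]_w (g (t, w))%:E.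
Proof.
move=> /ae_le_fubini_F; apply: ae_le_integral => //;
  exact: measurable_fun_fubini_F_setX.
Qed.

Lemma integrable_fubini_F_abs :
  \int[mu1]_(t in A) \int[mu2]_w `|f (t, w)|%:E < +oo ->
  mu1.-integrable A (fun t => \int[mu2]_w `|f (t, w)|%:E).
Proof.
move=> fint; apply/integrableP; split.
  apply: (@measurable_fun_fubini_F_setX (fun z => `|f z|%R)).
  exact: measurableT_comp (@normr_measurable R setT) mf.
rewrite (eq_integral (fun t => \int[mu2]_w `|f (t, w)|%:E)) // => t _.
by rewrite gee0_abs // integral_ge0.
Qed.

Lemma ae_ge0_le_iterated_integral_nonmeasurable (h : T1 * T2 -> \bar R) :
  (forall z, 0 <= h z) -> {ae pm, forall z, A z.1 -> `|f z|%:E <= h z} ->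
  \int[mu1]_(t in A) \int[mu2]_w `|f (t, w)|%:E <=
  \int[mu1]_(t in A) \int[mu2]_w h (t, w).
Proof.
move=> h0 /ae_product_xsection fh.
have mfabs : measurable_fun D (fun z => `|f z|%R).
  exact: measurableT_comp (@normr_measurable R setT) mf.
apply: (ae_ge0_le_integral_nonmeasurable mu1 mA).
- exact: measurable_fun_fubini_F_setX mfabs.
- by move=> t _; exact: integral_ge0.
- by move=> t _; exact: integral_ge0.
apply: filterS fh => t fht At.
apply: (ae_ge0_le_integral_nonmeasurable mu2 measurableT) => //.
- by apply/measurable_EFinP; exact: measurable_fun_pair2_setX mfabs.
- by apply: filterS (fht At) => w fhw _.
Qed.

Lemma ae_eq_of_le_iterated_integral :
  {ae pm, forall z, A z.1 -> (f z <= g z)%R} ->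
  \int[mu1]_(t in A) \int[mu2]_w `|f (t, w)|%:E < +oo ->
  \int[mu1]_(t in A) \int[mu2]_w (g (t, w))%:E <=
  \int[mu1]_(t in A) \int[mu2]_w (f (t, w))%:E ->
  {ae pm, forall z, A z.1 -> f z = g z}.
Proof.
move=> fg /integrable_fubini_F_abs intfabs GF.
have mF := measurable_fun_fubini_F_setX mf.
have intF : mu1.-integrable A (fun t => \int[mu2]_w (f (t, w))%:E).
  apply: le_integrable intfabs => // t At.
  rewrite [leRHS]gee0_abs ?integral_ge0 //.
  apply: le_trans (le_abse_integral _ measurableT (mEf At)) _.
  by under eq_integral do rewrite abse_EFin.
have FG := ae_eq_of_le_integral mu1 mA mF (measurable_fun_fubini_F_setX mg)
  (ae_le_fubini_F fg) intF GF.
apply: ae_product_of_xsection mf mg _.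
apply: filterS3 (ae_product_xsection fg) FG (integrable_ae mA intfabs).
move=> t fgt FGt finabs At.
have intft : mu2.-integrable setT (fun w => (f (t, w))%:E).
  apply/integrableP; split; first exact: mEf.
  by under eq_integral do rewrite abse_EFin; rewrite ltey_eq finabs.
have fgt' : {ae mu2, forall w, setT w -> (f (t, w))%:E <= (g (t, w))%:E}.
  by apply: filterS (fgt At) => w fgw _; rewrite lee_fin.
have GFt : \int[mu2]_w (g (t, w))%:E <= \int[mu2]_w (f (t, w))%:E.
  by rewrite (FGt At).
have := ae_eq_of_le_integral mu2 measurableT (mEf At) (mEg At) fgt' intft GFt.
by apply: filterS => w /(_ I) fgw; exact: EFin_inj fgw.
Qed.

End iterated_integral.

Section hamiltonian_process.
Context {R : realType} {d m : nat} {T : R} {dO : measure_display}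
  {Omega : measurableType dO} (P : probability Omega R) {U : set 'rV[R]_m}
  {H : R -> 'rV[R]_d -> 'rV[R]_m -> 'rV[R]_d -> 'M[R]_d -> R}
  {X : R -> Omega -> 'rV[R]_d} {v : R -> 'rV[R]_d -> R}.

Local Notation pm := (product_measure1 (@lebesgue_measure R) P).

(* [product_measure1] is not canonically a measure, so this instance is not
   inferred. *)
#[local] Instance ae_pm_filter : Filter (almost_everywhere pm) :=
  ae_filter_ringOfSetsType (pm : {measure set _ -> \bar R}).

Lemma Hinf_le_Hproc u t w : Uad T U u -> 0 <= t <= T ->
  (Hinf U H X v t w <= (Hproc H X v u t w)%:E)%E.
Proof.
by move=> [_ uU] tT; apply: ereal_inf_lbound; exists (u t (X t w)) => //; exact: uU.
Qed.

Hypothesis mH : @measurable_fun _ _ (R * Rvec R d * Rvec R m * Rvec R d * Rmat R d)%type R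
    setT (fun z => H z.1.1.1.1 z.1.1.1.2 z.1.1.2 z.1.2 z.2).
Hypothesis mX : @measurable_fun _ _ (R * Omega)%type (Rvec R d)
    (`[0, T] `*` setT) (fun z => X z.1 z.2).
Hypothesis mgrad : @measurable_fun _ _ (R * Rvec R d)%type (Rvec R d)
    (`[0, T] `*` setT) (fun z => gradx v z.1 z.2).
Hypothesis mhess : @measurable_fun _ _ (R * Rvec R d)%type (Rmat R d)
    (`[0, T] `*` setT) (fun z => hessx v z.1 z.2).

Lemma measurable_Hproc {u} : Uad T U u ->
  measurable_fun (`[0, T] `*` setT) (fun z : R * Omega => Hproc H X v u z.1 z.2).
Proof.
move=> [mu _].
have mD : measurable (`[0, T] `*` @setT Omega) by exact: measurableX.
have mD' : measurable (`[0, T] `*` @setT (Rvec R d)) by exact: measurableX.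
pose Y (z : R * Omega) : R * Rvec R d := (z.1, X z.1 z.2).
have mY : measurable_fun (`[0, T] `*` setT) Y.
  by apply: measurable_fun_pair_in => //; exact: measurable_funTS.
have YD : Y @` (`[0, T] `*` setT) `<=` `[0, T] `*` setT.
  by move=> _ [z [Tz _] <-].
have mYcomp d' (V : measurableType d') (k : R * Rvec R d -> V) :
    measurable_fun (`[0, T] `*` setT) k ->
    measurable_fun (`[0, T] `*` setT) (k \o Y).
  by move=> mk; exact: measurable_comp mD' YD mk mY.
pose Phi (z : R * Omega) : (R * Rvec R d * Rvec R m * Rvec R d * Rmat R d)%type :=
  ((((z.1, X z.1 z.2), u z.1 (X z.1 z.2)), gradx v z.1 (X z.1 z.2)),
   hessx v z.1 (X z.1 z.2)).
suff mPhi : measurable_fun (`[0, T] `*` setT) Phi by exact: measurableT_comp mH mPhi.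
apply: measurable_fun_pair_in => //; last exact: (mYcomp _ _ _ mhess).
apply: measurable_fun_pair_in => //; last exact: (mYcomp _ _ _ mgrad).
by apply: measurable_fun_pair_in => //; last exact: (mYcomp _ _ _ mu).
Qed.

Context {us : R -> 'rV[R]_d -> 'rV[R]_m}.
Hypothesis Uus : Uad T U us.
Hypothesis opt_us : {ae pm, forall z : R * Omega,
  0 <= z.1 <= T -> (Hproc H X v us z.1 z.2)%:E = Hinf U H X v z.1 z.2}.

Let mI : measurable (`[0, T]%classic : set R). Proof. exact: measurable_itv. Qed.

Lemma ae_optimal_le_Hproc {u} : Uad T U u -> {ae pm, forall z,
  `[0, T]%classic z.1 -> Hproc H X v us z.1 z.2 <= Hproc H X v u z.1 z.2}.
Proof.
move=> Uu; apply: filterS opt_us => z opt; rewrite /= in_itv /= => zT.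
by rewrite -lee_fin (opt zT); exact: Hinf_le_Hproc Uu zT.
Qed.

Lemma Jcost_optimal_le u : Uad T U u ->
  (Jcost P T H X v us <= Jcost P T H X v u)%E.
Proof.
(* [exact:] would fail: elaborating against the goal does not identify the
   measurable structure on the domain of [lebesgue_measure] with that of [R]. *)
by move=> Uu; move: (ae_le_iterated_integral lebesgue_measure P mI
  (measurable_Hproc Uus) (measurable_Hproc Uu) (ae_optimal_le_Hproc Uu)).
Qed.

Lemma Jcost_optimal :
  Jcost P T H X v us = ereal_inf [set Jcost P T H X v ub | ub in Uad T U].
Proof.
apply/le_anti/andP; split; last by apply: ereal_inf_lbound; exists us.
by apply/ereal_infP => _ [u Uu <-]; exact: Jcost_optimal_le.
Qed.

Hypothesis intHinf : (\int[lebesgue_measure]_(t in `[0%R, T]%classic)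
  \int[P]_w `|Hinf U H X v t w| < +oo)%E.

Lemma iterated_integral_abs_optimal_lt :
  (\int[lebesgue_measure]_(t in `[0%R, T]%classic)
     \int[P]_w `|Hproc H X v us t w|%:E < +oo)%E.
Proof.
apply: le_lt_trans intHinf.
have : {ae pm, forall z, `[0, T]%classic z.1 ->
    (`|Hproc H X v us z.1 z.2|%:E <= `|Hinf U H X v z.1 z.2|)%E}.
  apply: filterS opt_us => z opt; rewrite /= in_itv /= => zT.
  by rewrite -abse_EFin opt.
by move/(ae_ge0_le_iterated_integral_nonmeasurable lebesgue_measure P mI
  (measurable_Hproc Uus) (fun z => `|Hinf U H X v z.1 z.2|%E) (fun _ => abse_ge0 _)).
Qed.

Lemma Jcost_min_optimal u : Uad T U u ->
  Jcost P T H X v u = ereal_inf [set Jcost P T H X v ub | ub in Uad T U] ->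
  {ae pm, forall z : R * Omega,
    0 <= z.1 <= T -> (Hproc H X v u z.1 z.2)%:E = Hinf U H X v z.1 z.2}.
Proof.
move=> Uu J_u.
have J_u_le : (Jcost P T H X v u <= Jcost P T H X v us)%E.
  by rewrite J_u Jcost_optimal.
have := ae_eq_of_le_iterated_integral lebesgue_measure P mI (measurable_Hproc Uus)
  (measurable_Hproc Uu) (ae_optimal_le_Hproc Uu) iterated_integral_abs_optimal_lt
  J_u_le.
apply: filterS2 opt_us => z opt opt_u zT.
by rewrite -opt_u ?in_itv // opt.
Qed.

End hamiltonian_process.

Theorem lemma3p1 (R : realType) (d m : nat) (T : R) (hT : 0 < T)
  (dO : measure_display) (Omega : measurableType dO) (P : probability Omega R)
  (U : set 'rV[R]_m)
  (H : R -> 'rV[R]_d -> 'rV[R]_m -> 'rV[R]_d -> 'M[R]_d -> R)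
  (X : R -> Omega -> 'rV[R]_d)
  (v : R -> 'rV[R]_d -> R) :
  (* standing measurability: H Borel, X a jointly measurable process *)
  @measurable_fun _ _ (R * Rvec R d * Rvec R m * Rvec R d * Rmat R d)%type R
    setT (fun z => H z.1.1.1.1 z.1.1.1.2 z.1.1.2 z.1.2 z.2) ->
  @measurable_fun _ _ (R * Omega)%type (Rvec R d)
    (`[0, T] `*` setT) (fun z => X z.1 z.2) ->
  (* v Borel measurable, with Borel measurable x-gradient and x-Hessian *)
  @measurable_fun _ _ (R * Rvec R d)%type R
    (`[0, T] `*` setT) (fun z => v z.1 z.2) ->
  @measurable_fun _ _ (R * Rvec R d)%type (Rvec R d)
    (`[0, T] `*` setT) (fun z => gradx v z.1 z.2) ->
  @measurable_fun _ _ (R * Rvec R d)%type (Rmat R d)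
    (`[0, T] `*` setT) (fun z => hessx v z.1 z.2) ->
  (* integrability of the infimum *)
  (\int[lebesgue_measure]_(t in `[0%R, T]%classic) \int[P]_w `|Hinf U H X v t w| < +oo)%E ->
  (* existence of an optimal feedback control under v *)
  (exists u, @Uad R d m T U u /\
     {ae product_measure1 lebesgue_measure P, forall z : R * Omega,
        0 <= z.1 <= T -> (Hproc H X v u z.1 z.2)%:E = Hinf U H X v z.1 z.2}) ->
  (* the minimization problem has a solution ... *)
  (exists u, @Uad R d m T U u /\
     Jcost P T H X v u = ereal_inf [set Jcost P T H X v ub | ub in @Uad R d m T U])
  /\
  (* ... and every solution satisfies the pointwise optimality ( * ) *)
  (forall u, @Uad R d m T U u ->
     Jcost P T H X v u = ereal_inf [set Jcost P T H X v ub | ub in @Uad R d m T U] ->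
     {ae product_measure1 lebesgue_measure P, forall z : R * Omega,
        0 <= z.1 <= T -> (Hproc H X v u z.1 z.2)%:E = Hinf U H X v z.1 z.2}).
Proof.
move=> mH mX _ mgrad mhess intHinf [us [Uus opt_us]]; split.
  by exists us; split => //; move: (Jcost_optimal P mH mX mgrad mhess Uus opt_us).
by move=> u; move: (Jcost_min_optimal P mH mX mgrad mhess Uus opt_us intHinf u).
Qed.
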